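(* Let $v:\mathbb{T}\to\mathbb{R}$ be real-analytic, $\alpha\in\mathbb{R}\setminus\mathbb{Q}$, $E\in\mathbb{R}$, and let $\epsilon$ (in the strip of holomorphy of $v$) satisfy $m:=m(\epsilon;E)=\min_{x\in\mathbb{T}}|E-v(x+i\epsilon)|>2$. Then $(\alpha,B^E(\cdot+i\epsilon))$ is uniformly hyperbolic and $$L(\epsilon;E)=\int_{\mathbb{T}}\log|E-v(x+i\epsilon)|\,dx+\Xi,$$ where, with $\sigma:=\min\Big\{1,\ \frac{m-1}{m(m-2)}\Big\}$, $$\log\frac{(1-\sigma/m)^2+1/m^2}{1+\sigma^2}\ \le\ 2\Xi\ \le\ \log\Big((1+\sigma/m)^2+\frac1{m^2}\Big).$$ In particular $\Xi\ge-\log 2$, i.e. $L(\epsilon;E)\ge\int_{\mathbb{T}}\log|E-v(x+i\epsilon)|dx-\log2$.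
   Context: $\mathbb{T}=\mathbb{R}/\mathbb{Z}$; $B^E(z)=\begin{pmatrix}E-v(z)&-1\\1&0\end{pmatrix}$, $B^E_n(z)=B^E(z+(n-1)\alpha)\cdots B^E(z)$; $L(\epsilon;E)=\lim_{n}\frac1n\int_{\mathbb{T}}\log\|B^E_n(x+i\epsilon)\|dx$. Uniform hyperbolicity of an $SL(2,\mathbb{C})$ cocycle means existence of a continuous invariant splitting $\mathbb{C}^2=E^u(x)\oplus E^s(x)$ with uniform exponential expansion on $E^u$ and contraction on $E^s$. *)

From Stdlib Require Import Reals Lra ClassicalEpsilon.
Open Scope R_scope.

Definition Cplx : Type := (R * R)%type.
Definition Re (z : Cplx) : R := fst z.
Definition Im (z : Cplx) : R := snd z.
Definition RtoC (x : R) : Cplx := (x, 0).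
Definition Cadd (z w : Cplx) : Cplx := (Re z + Re w, Im z + Im w).
Definition Copp (z : Cplx) : Cplx := (- Re z, - Im z).
Definition Csub (z w : Cplx) : Cplx := Cadd z (Copp w).
Definition Cmul (z w : Cplx) : Cplx :=
  (Re z * Re w - Im z * Im w, Re z * Im w + Im z * Re w).
Definition Cabs (z : Cplx) : R := sqrt (Re z ^ 2 + Im z ^ 2).
Definition Cinv (z : Cplx) : Cplx :=
  (Re z / (Re z ^ 2 + Im z ^ 2), - Im z / (Re z ^ 2 + Im z ^ 2)).
Definition Cdiv (z w : Cplx) : Cplx := Cmul z (Cinv w).
Definition mkC (x y : R) : Cplx := (x, y).

Definition in_strip (h : R) (z : Cplx) : Prop := Rabs (Im z) < h.

Definition C_differentiable_at (f : Cplx -> Cplx) (z : Cplx) : Prop :=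
  exists l : Cplx, forall eps, 0 < eps -> exists delta, 0 < delta /\
    forall w : Cplx, w <> z -> Cabs (Csub w z) < delta ->
      Cabs (Csub (Cdiv (Csub (f w) (f z)) (Csub w z)) l) < eps.

Definition holomorphic_on_strip (h : R) (f : Cplx -> Cplx) : Prop :=
  forall z, in_strip h z -> C_differentiable_at f z.

(* v : T -> R real-analytic, given through its holomorphic extension to a
   strip |Im z| < h (h > 0), 1-periodic and real on the real axis. *)
Definition real_analytic_on_T (h : R) (v : Cplx -> Cplx) : Prop :=
  0 < h /\ holomorphic_on_strip h v /\
  (forall z, in_strip h z -> v (Cadd z (RtoC 1)) = v z) /\
  (forall x : R, Im (v (RtoC x)) = 0).

Definition irrational (a : R) : Prop :=
  forall (p q : Z), q <> 0%Z -> a * IZR q <> IZR p.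

Definition C2 : Type := (Cplx * Cplx)%type.
Definition vnorm (u : C2) : R := sqrt (Cabs (fst u) ^ 2 + Cabs (snd u) ^ 2).
Definition vscale (c : Cplx) (u : C2) : C2 := (Cmul c (fst u), Cmul c (snd u)).

(* matrix ((a, b), (c, d)) = [[a, b], [c, d]] *)
Definition M2 : Type := ((Cplx * Cplx) * (Cplx * Cplx))%type.
Definition mk2 (a b c d : Cplx) : M2 := ((a, b), (c, d)).
Definition mapply (A : M2) (u : C2) : C2 :=
  let '((a, b), (c, d)) := A in
  (Cadd (Cmul a (fst u)) (Cmul b (snd u)),
   Cadd (Cmul c (fst u)) (Cmul d (snd u))).
Definition mmul (A B : M2) : M2 :=
  let '((a, b), (c, d)) := A in
  let '((a', b'), (c', d')) := B in
  mk2 (Cadd (Cmul a a') (Cmul b c')) (Cadd (Cmul a b') (Cmul b d'))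
      (Cadd (Cmul c a') (Cmul d c')) (Cadd (Cmul c b') (Cmul d d')).
Definition mid : M2 := mk2 (RtoC 1) (RtoC 0) (RtoC 0) (RtoC 1).

Definition opnorm (A : M2) : R :=
  epsilon (inhabits 0)
    (fun r => is_lub (fun t => exists u : C2, vnorm u = 1 /\ t = vnorm (mapply A u)) r).

Fixpoint cocycle_iter (alpha : R) (A : R -> M2) (n : nat) (x : R) : M2 :=
  match n with
  | O => mid
  | S k => mmul (A (x + INR k * alpha)) (cocycle_iter alpha A k x)
  end.

Definition span (u : C2) (w : C2) : Prop := exists c : Cplx, w = vscale c u.

Definition C2_continuous (f : R -> C2) : Prop :=
  forall x eps, 0 < eps -> exists delta, 0 < delta /\
    forall y, Rabs (y - x) < delta ->
      vnorm (Cadd (fst (f y)) (Copp (fst (f x))), Cadd (snd (f y)) (Copp (snd (f x))))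
      < eps.


(* A continuous invariant splitting Cplx^2 = E^u(x) (+) E^s(x) into lines is
   given by continuous nonvanishing spanning vector fields eu, es on R
   (the lines are required to be 1-periodic; since R is contractible every
   continuous line field on R admits such a spanning field). *)
Definition uniformly_hyperbolic (alpha : R) (A : R -> M2) : Prop :=
  exists (eu es : R -> C2) (K lam : R),
    C2_continuous eu /\ C2_continuous es /\
    (forall x, eu x <> (RtoC 0, RtoC 0) /\ es x <> (RtoC 0, RtoC 0)) /\
    (forall x, Csub (Cmul (fst (eu x)) (snd (es x))) (Cmul (snd (eu x)) (fst (es x)))
               <> RtoC 0) /\
    (* well defined on T *)
    (forall x, span (eu x) (eu (x + 1)) /\ span (es x) (es (x + 1))) /\
    (forall x, span (eu (x + alpha)) (mapply (A x) (eu x)) /\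
               span (es (x + alpha)) (mapply (A x) (es x))) /\
    0 < K /\ 1 < lam /\
    (forall x n w, span (eu x) w ->
        vnorm (mapply (cocycle_iter alpha A n x) w) >= / K * lam ^ n * vnorm w) /\
    (forall x n w, span (es x) w ->
        vnorm (mapply (cocycle_iter alpha A n x) w) <= K * / lam ^ n * vnorm w).

Definition BE (v : Cplx -> Cplx) (E : R) (z : Cplx) : M2 :=
  mk2 (Csub (RtoC E) (v z)) (RtoC (-1)) (RtoC 1) (RtoC 0).

Definition Bshift (v : Cplx -> Cplx) (E eps : R) (x : R) : M2 := BE v E (mkC x eps).

(* integral over T = [0,1] (Riemann integral; value for integrable f) *)
Definition integral01 (f : R -> R) : R :=
  epsilon (inhabits 0)
    (fun I => exists pr : Riemann_integrable f 0 1, RiemannInt pr = I).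

Definition minimum (f : R -> R) : R :=
  epsilon (inhabits 0) (fun r => (exists x, f x = r) /\ forall x, r <= f x).

Definition m_val (v : Cplx -> Cplx) (E eps : R) : R :=
  minimum (fun x => Cabs (Csub (RtoC E) (v (mkC x eps)))).

Definition L_seq (v : Cplx -> Cplx) (alpha E eps : R) (n : nat) : R :=
  / INR n * integral01 (fun x => ln (opnorm (cocycle_iter alpha (Bshift v E eps) n x))).

(** Write [a(x) = E - v(x + i eps)], so that [|a| >= m > 2] on the real line, and let
    [q = 1/(m-1)].  The maps [s |-> 1/(a(. - alpha) - s(. - alpha))] and
    [u |-> 1/(a - u(. + alpha))] are contractions, with constant [q^2], of the continuous
    1-periodic functions bounded by [q].  Their fixed points give invariant line fields
    [(1, s)] and [(u, 1)], on which the cocycle acts by multiplication with [a - s], of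
    modulus at least [m - q > 1], and with [u], of modulus at most [1/(m - q)]: this is
    uniform hyperbolicity.  Moreover [||B_n(x)||] equals [prod_k |a - s|(x + k alpha)] up
    to a bounded factor, and translation by [alpha] preserves integrals over a period, so
    [L = int log|a - s| = int log|a| + Xi] with [Xi = int log|1 - s/a|].  As [|s/a| <= q/m],
    [Xi] lies in [[ln (1 - q/m), ln (1 + q/m)]], which is inside the claimed interval. *)

From Stdlib Require Import Reals Lra Lia ZArith ClassicalEpsilon FunctionalExtensionality.
From Coquelicot Require Import Rcomplements Hierarchy Continuity RInt ElemFct.
Open Scope R_scope.

Lemma Cplx_ext (z w : Cplx) : Re z = Re w -> Im z = Im w -> z = w.
Proof. destruct z, w; unfold Re, Im; simpl; intros; subst; reflexivity. Qed.

Ltac Cplx_ring :=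
  apply Cplx_ext; unfold Csub, Cadd, Copp, Cmul, Cinv, RtoC, mkC, Re, Im; cbn [fst snd].

Lemma sqrt_le_of_le_sq a b : 0 <= b -> a <= b ^ 2 -> sqrt a <= b.
Proof. intros Hb H. rewrite <- (sqrt_pow2 b Hb). apply sqrt_le_1_alt. exact H. Qed.

Lemma le_sqrt_of_sq_le a b : 0 <= b -> b ^ 2 <= a -> b <= sqrt a.
Proof. intros Hb H. rewrite <- (sqrt_pow2 b Hb). apply sqrt_le_1_alt. exact H. Qed.

Lemma Cabs_ge0 z : 0 <= Cabs z.
Proof. apply sqrt_pos. Qed.

Lemma Cabs_sq z : Cabs z ^ 2 = Re z ^ 2 + Im z ^ 2.
Proof. unfold Cabs. rewrite <- Rsqr_pow2, Rsqr_sqrt; [ring|nra]. Qed.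

Lemma Cabs_gt0_sum_sq z : 0 < Cabs z -> 0 < Re z ^ 2 + Im z ^ 2.
Proof. intros H. rewrite <- Cabs_sq. nra. Qed.

Lemma Cabs_mul z w : Cabs (Cmul z w) = Cabs z * Cabs w.
Proof.
  unfold Cabs, Cmul, Re, Im; simpl. rewrite <- sqrt_mult by nra.
  f_equal; ring.
Qed.

Lemma Cabs_RtoC x : Cabs (RtoC x) = Rabs x.
Proof.
  unfold Cabs, RtoC, Re, Im; simpl. rewrite <- sqrt_Rsqr_abs. f_equal. unfold Rsqr; ring.
Qed.

Lemma Cabs_Re z : Rabs (Re z) <= Cabs z.
Proof.
  apply le_sqrt_of_sq_le; [apply Rabs_pos|].
  rewrite <- Rsqr_pow2, <- Rsqr_abs, Rsqr_pow2. nra.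
Qed.

Lemma Cabs_Im z : Rabs (Im z) <= Cabs z.
Proof.
  apply le_sqrt_of_sq_le; [apply Rabs_pos|].
  rewrite <- Rsqr_pow2, <- Rsqr_abs, Rsqr_pow2. nra.
Qed.

Lemma Cabs_le_Re_Im z : Cabs z <= Rabs (Re z) + Rabs (Im z).
Proof.
  assert (HR := Rabs_pos (Re z)). assert (HI := Rabs_pos (Im z)).
  apply sqrt_le_of_le_sq; [lra|].
  rewrite <- (Rsqr_pow2 (Re z)), <- (Rsqr_pow2 (Im z)), (Rsqr_abs (Re z)), (Rsqr_abs (Im z)).
  unfold Rsqr. nra.
Qed.

Lemma Cabs_triangle z w : Cabs (Cadd z w) <= Cabs z + Cabs w.
Proof.
  assert (Hz := Cabs_ge0 z). assert (Hw := Cabs_ge0 w).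
  apply sqrt_le_of_le_sq; [lra|]. change (Re (Cadd z w)) with (Re z + Re w).
  change (Im (Cadd z w)) with (Im z + Im w).
  assert (Hzw : Re z * Re w + Im z * Im w <= Cabs z * Cabs w).
  { apply Rsqr_incr_0_var; [|nra]. unfold Rsqr.
    replace (Cabs z * Cabs w * (Cabs z * Cabs w)) with (Cabs z ^ 2 * Cabs w ^ 2) by ring.
    rewrite !Cabs_sq. generalize (pow2_ge_0 (Re z * Im w - Im z * Re w)). nra. }
  replace ((Cabs z + Cabs w) ^ 2) with (Cabs z ^ 2 + Cabs w ^ 2 + 2 * (Cabs z * Cabs w)) by ring.
  rewrite !Cabs_sq. nra.
Qed.

Lemma Cabs_opp z : Cabs (Copp z) = Cabs z.
Proof. unfold Cabs, Copp, Re, Im; simpl. f_equal; ring. Qed.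

Lemma Cabs_sub_le z w : Cabs (Csub z w) <= Cabs z + Cabs w.
Proof. unfold Csub. rewrite <- (Cabs_opp w). apply Cabs_triangle. Qed.

Lemma Cabs_sub_triangle a b c : Cabs (Csub a c) <= Cabs (Csub a b) + Cabs (Csub b c).
Proof.
  replace (Csub a c) with (Cadd (Csub a b) (Csub b c)) by (Cplx_ring; ring).
  apply Cabs_triangle.
Qed.

Lemma Cabs_sub_ge z w : Cabs z - Cabs w <= Cabs (Csub z w).
Proof.
  assert (H := Cabs_triangle (Csub z w) w).
  replace (Cadd (Csub z w) w) with z in H by (Cplx_ring; ring). lra.
Qed.

Lemma Cabs_sub_sym z w : Cabs (Csub z w) = Cabs (Csub w z).
Proof. unfold Cabs, Csub, Cadd, Copp, Re, Im; simpl; f_equal; ring. Qed.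

Lemma Csub_self z : Csub z z = RtoC 0.
Proof. Cplx_ring; ring. Qed.

Lemma Csub_0_r z : Csub z (RtoC 0) = z.
Proof. Cplx_ring; ring. Qed.

Lemma Cabs_sub_le0 z w : Cabs (Csub z w) <= 0 -> z = w.
Proof.
  intros H. assert (H2 := Cabs_sq (Csub z w)).
  assert (Cabs (Csub z w) = 0) as H0 by (generalize (Cabs_ge0 (Csub z w)); lra).
  rewrite H0 in H2. destruct z as [a b], w as [c d].
  unfold Csub, Cadd, Copp, Re, Im in H2; simpl in H2.
  assert (0 <= (a + - c) ^ 2) by apply pow2_ge_0. assert (0 <= (b + - d) ^ 2) by apply pow2_ge_0.
  f_equal; nra.
Qed.

Lemma Cinv_mul z : 0 < Cabs z -> Cmul (Cinv z) z = RtoC 1.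
Proof.
  intros H. apply Cabs_gt0_sum_sq in H. destruct z as [a b]; unfold Re, Im in *; simpl in *.
  Cplx_ring; field; lra.
Qed.

Lemma Cabs_inv z : 0 < Cabs z -> Cabs (Cinv z) = / Cabs z.
Proof.
  intros H. assert (Hm := Cabs_mul (Cinv z) z). rewrite Cinv_mul in Hm by exact H.
  rewrite Cabs_RtoC, Rabs_R1 in Hm. field_simplify_eq; [|lra]. lra.
Qed.

Lemma Cabs_sub_inv z w : 0 < Cabs z -> 0 < Cabs w ->
  Cabs (Csub (Cinv z) (Cinv w)) = Cabs (Csub z w) / (Cabs z * Cabs w).
Proof.
  intros Hz Hw.
  replace (Csub (Cinv z) (Cinv w)) with (Cmul (Cmul (Cinv z) (Cinv w)) (Csub w z)).
  - rewrite !Cabs_mul, !Cabs_inv, Cabs_sub_sym by lra. field; lra.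
  - apply Cabs_gt0_sum_sq in Hz; apply Cabs_gt0_sum_sq in Hw.
    destruct z as [a b], w as [c d]; unfold Re, Im in *; simpl in *.
    Cplx_ring; field; lra.
Qed.

Lemma Cmul_Cdiv p d : 0 < Cabs d -> Cmul (Cdiv p d) d = p.
Proof.
  intros H. apply Cabs_gt0_sum_sq in H. destruct p as [a b], d as [c e].
  unfold Re, Im in *; cbn [fst snd] in *. unfold Cdiv. Cplx_ring; field; lra.
Qed.

Lemma continuity_pt_sq (f : R -> R) x : continuity_pt f x -> continuity_pt (fun y => f y ^ 2) x.
Proof.
  intros H. apply continuity_pt_ext with (fun y => f y * f y); [intros; ring|].
  apply (continuity_pt_mult f f); auto.
Qed.

Ltac continuity_tac :=
  match goal with
  | |- continuity_pt (fun y => @?A y + @?B y) ?x => apply (continuity_pt_plus A B); continuity_tac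
  | |- continuity_pt (fun y => @?A y - @?B y) ?x => apply (continuity_pt_minus A B); continuity_tac
  | |- continuity_pt (fun y => @?A y * @?B y) ?x => apply (continuity_pt_mult A B); continuity_tac
  | |- continuity_pt (fun y => - @?A y) ?x => apply (continuity_pt_opp A); continuity_tac
  | |- continuity_pt (fun y => @?A y / @?B y) ?x =>
      apply (continuity_pt_div A B); [continuity_tac|continuity_tac|]
  | |- continuity_pt (fun y => @?A y ^ 2) ?x => apply (continuity_pt_sq A); continuity_tac
  | |- continuity_pt (fun y => ?c) ?x => apply continuity_pt_const; intros ? ?; reflexivity
  | |- continuity_pt (fun y => y) ?x => apply derivable_continuous_pt, derivable_pt_id
  | _ => try assumption
  end.

Lemma continuity_pt_shift (F : R -> R) c x :
  continuity_pt F (x + c) -> continuity_pt (fun y => F (y + c)) x.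
Proof. intros H. apply (continuity_pt_comp (fun y => y + c) F); [continuity_tac|exact H]. Qed.

Lemma continuity_pt_ln (F : R -> R) x :
  continuity_pt F x -> 0 < F x -> continuity_pt (fun y => ln (F y)) x.
Proof.
  intros H Hp. apply (continuity_pt_comp F ln); auto.
  apply continuity_pt_filterlim. apply continuous_ln; auto.
Qed.

Definition Ccont (f : R -> Cplx) : Prop :=
  forall x, continuity_pt (fun y => Re (f y)) x /\ continuity_pt (fun y => Im (f y)) x.

Lemma Ccont_ext f g : (forall x, f x = g x) -> Ccont f -> Ccont g.
Proof.
  intros E H x; destruct (H x) as [H1 H2]; split;
  [apply (continuity_pt_ext (fun y => Re (f y))) | apply (continuity_pt_ext (fun y => Im (f y)))];
  auto; intros; rewrite E; reflexivity.
Qed.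

Lemma Ccont_const c : Ccont (fun _ => c).
Proof. intros x; split; continuity_tac. Qed.

Lemma Ccont_add f g : Ccont f -> Ccont g -> Ccont (fun x => Cadd (f x) (g x)).
Proof.
  intros Hf Hg x; destruct (Hf x), (Hg x).
  unfold Cadd, Re, Im in *; cbn [fst snd] in *; split; continuity_tac.
Qed.

Lemma Ccont_sub f g : Ccont f -> Ccont g -> Ccont (fun x => Csub (f x) (g x)).
Proof.
  intros Hf Hg x; destruct (Hf x), (Hg x).
  unfold Csub, Cadd, Copp, Re, Im in *; cbn [fst snd] in *; split; continuity_tac.
Qed.

Lemma Ccont_mul f g : Ccont f -> Ccont g -> Ccont (fun x => Cmul (f x) (g x)).
Proof.
  intros Hf Hg x; destruct (Hf x), (Hg x).
  unfold Cmul, Re, Im in *; cbn [fst snd] in *; split; continuity_tac.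
Qed.

Lemma Ccont_inv f : Ccont f -> (forall x, 0 < Cabs (f x)) -> Ccont (fun x => Cinv (f x)).
Proof.
  intros Hf Hp x; destruct (Hf x). assert (Hq := Cabs_gt0_sum_sq (f x) (Hp x)).
  unfold Cinv, Re, Im in *; cbn [fst snd] in *; split; continuity_tac; lra.
Qed.

Lemma Ccont_shift f c : Ccont f -> Ccont (fun x => f (x + c)).
Proof.
  intros Hf x; destruct (Hf (x + c)).
  split; apply (continuity_pt_shift (fun y => _ (f y))); auto.
Qed.

Lemma continuity_pt_Cabs f : Ccont f -> forall x, continuity_pt (fun y => Cabs (f y)) x.
Proof.
  intros Hf x. destruct (Hf x). unfold Cabs.
  apply (continuity_pt_comp (fun y => Re (f y) ^ 2 + Im (f y) ^ 2) sqrt); [continuity_tac|].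
  apply continuity_pt_sqrt, Rplus_le_le_0_compat; apply pow2_ge_0.
Qed.

Lemma pow_lt_1_eventually_lt k y : 0 <= k < 1 -> 0 < y -> exists N, k ^ N < y.
Proof.
  intros Hk Hy. destruct (pow_lt_1_zero k) with y as [N HN]; [rewrite Rabs_right; lra|lra|].
  exists N. specialize (HN N (le_n N)). rewrite Rabs_right in HN; auto.
  apply Rle_ge, pow_le; lra.
Qed.

Lemma Rmult_pow_lt_1_eventually_lt D k y : 0 <= D -> 0 <= k < 1 -> 0 < y -> exists N, D * k ^ N < y.
Proof.
  intros HD Hk Hy.
  destruct (pow_lt_1_eventually_lt k (y / (D + 1)) Hk) as [N HN]; [apply Rdiv_lt_0_compat; lra|].
  exists N. assert (0 <= k ^ N) by (apply pow_le; lra).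
  apply Rle_lt_trans with ((D + 1) * k ^ N); [nra|].
  apply Rmult_lt_reg_r with (/ (D + 1)); [apply Rinv_0_lt_compat; lra|].
  replace ((D + 1) * k ^ N * / (D + 1)) with (k ^ N) by (field; lra). exact HN.
Qed.

Lemma le0_of_le_geometric z D k : 0 <= k < 1 -> (forall n, z <= D * k ^ n) -> z <= 0.
Proof.
  intros Hk H. destruct (Rle_or_lt z 0) as [|Hz]; auto.
  assert (HD : 0 <= D) by (specialize (H 0%nat); simpl in H; lra).
  destruct (Rmult_pow_lt_1_eventually_lt D k z HD Hk Hz) as [N HN].
  specialize (H N). lra.
Qed.

Lemma geometric_tail_bound (u : nat -> R) C k : 0 <= k < 1 ->
  (forall n, Rabs (u (S n) - u n) <= C * k ^ n) ->
  forall n p, (n <= p)%nat -> Rabs (u p - u n) <= C * k ^ n / (1 - k).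
Proof.
  intros Hk H.
  assert (HC : 0 <= C) by (specialize (H 0%nat); simpl in H; generalize (Rabs_pos (u 1%nat - u 0%nat)); lra).
  assert (Hkn : forall n, 0 <= k ^ n) by (intros; apply pow_le; lra).
  assert (Hj : forall n j, Rabs (u (n + j)%nat - u n) <= C * k ^ n * (1 - k ^ j) / (1 - k)).
  { intros n j; induction j.
    - rewrite Nat.add_0_r, Rminus_diag, Rabs_R0. simpl. apply Req_le. field; lra.
    - replace (n + S j)%nat with (S (n + j)) by lia.
      replace (u (S (n + j)) - u n) with ((u (S (n + j)) - u (n + j)%nat) + (u (n + j)%nat - u n)) by ring.
      eapply Rle_trans; [apply Rabs_triang|].
      specialize (H (n + j)%nat). rewrite pow_add in H.
      replace (C * k ^ n * (1 - k ^ S j) / (1 - k))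
        with (C * (k ^ n * k ^ j) + C * k ^ n * (1 - k ^ j) / (1 - k)) by (simpl; field; lra).
      lra. }
  intros n p Hnp. replace p with (n + (p - n))%nat by lia.
  eapply Rle_trans; [apply Hj|]. unfold Rdiv. apply Rmult_le_compat_r.
  - apply Rlt_le, Rinv_0_lt_compat; lra.
  - assert (0 <= C * k ^ n) by (apply Rmult_le_pos; auto).
    generalize (Hkn (p - n)%nat). nra.
Qed.

Lemma geometric_cauchy_limit (u : nat -> R) C k : 0 <= k < 1 ->
  (forall n, Rabs (u (S n) - u n) <= C * k ^ n) ->
  exists l, forall n, Rabs (u n - l) <= C * k ^ n / (1 - k).
Proof.
  intros Hk H. assert (Hb := geometric_tail_bound u C k Hk H).
  assert (HC : 0 <= C) by (specialize (H 0%nat); simpl in H; generalize (Rabs_pos (u 1%nat - u 0%nat)); lra).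
  assert (HD : 0 <= C / (1 - k)) by (apply Rdiv_le_0_compat; lra).
  assert (Hc : Cauchy_crit u).
  { intros e He.
    destruct (Rmult_pow_lt_1_eventually_lt (C / (1 - k)) k (e / 2) HD Hk) as [N HN]; [lra|].
    exists N. intros n p Hn Hp. unfold R_dist.
    replace (u n - u p) with ((u n - u N) - (u p - u N)) by ring.
    eapply Rle_lt_trans; [apply Rabs_triang|]. rewrite Rabs_Ropp.
    generalize (Hb N n Hn) (Hb N p Hp).
    replace (C * k ^ N / (1 - k)) with (C / (1 - k) * k ^ N) by (field; lra). lra. }
  destruct (Rcomplete.R_complete u Hc) as [l Hl]. exists l. intros n.
  destruct (Rle_or_lt (Rabs (u n - l)) (C * k ^ n / (1 - k))) as [|Hlt]; auto.
  exfalso. destruct (Hl (Rabs (u n - l) - C * k ^ n / (1 - k))) as [N HN]; [lra|].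
  specialize (HN (n + N)%nat ltac:(lia)). unfold R_dist in HN.
  specialize (Hb n (n + N)%nat ltac:(lia)).
  assert (Rabs (u n - l) <= Rabs (u (n + N)%nat - u n) + Rabs (u (n + N)%nat - l)).
  { replace (u n - l) with (- (u (n + N)%nat - u n) + (u (n + N)%nat - l)) by ring.
    eapply Rle_trans; [apply Rabs_triang|]. rewrite Rabs_Ropp. lra. }
  lra.
Qed.

Lemma continuity_pt_uniform_limit (F : nat -> R -> R) G D k : 0 <= k < 1 ->
  (forall n x, continuity_pt (F n) x) -> (forall n x, Rabs (F n x - G x) <= D * k ^ n) ->
  forall x, continuity_pt G x.
Proof.
  intros Hk HF HG x e He.
  assert (HD : 0 <= D) by (specialize (HG 0%nat x); simpl in HG; generalize (Rabs_pos (F 0%nat x - G x)); lra).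
  destruct (Rmult_pow_lt_1_eventually_lt D k (e / 3) HD Hk) as [N HN]; [lra|].
  destruct (HF N x (e / 3)) as [d [Hd Hc]]; [lra|].
  exists d; split; auto. intros y [Hxy Hy]. specialize (Hc y (conj Hxy Hy)).
  simpl in *. unfold R_dist in *.
  generalize (HG N x) (HG N y); intros H1 H2.
  replace (G y - G x) with (- (F N y - G y) + (F N y - F N x) + (F N x - G x)) by ring.
  eapply Rle_lt_trans; [eapply Rle_trans; [apply Rabs_triang|]|].
  { apply Rplus_le_compat_r. apply Rabs_triang. }
  rewrite Rabs_Ropp. lra.
Qed.

Lemma Ccont_geometric_limit (f : nat -> R -> Cplx) C k : 0 <= k < 1 ->
  (forall n, Ccont (f n)) ->
  (forall n x, Cabs (Csub (f (S n) x) (f n x)) <= C * k ^ n) ->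
  exists s, Ccont s /\ forall n x, Cabs (Csub (f n x) (s x)) <= 2 * (C / (1 - k)) * k ^ n.
Proof.
  intros Hk Hf Hstep.
  assert (Hlim : forall (part : Cplx -> R), (forall z, Rabs (part z) <= Cabs z) ->
            (forall z w, part (Csub z w) = part z - part w) ->
            exists p : R -> R, forall n x, Rabs (part (f n x) - p x) <= C / (1 - k) * k ^ n).
  { intros part Hpart Hsub.
    assert (Hx : forall x, { l | forall n, Rabs (part (f n x) - l) <= C * k ^ n / (1 - k) }).
    { intros x. apply constructive_indefinite_description, geometric_cauchy_limit; auto.
      intros n. rewrite <- Hsub. eapply Rle_trans; [apply Hpart|apply Hstep]. }
    exists (fun x => proj1_sig (Hx x)). intros n x.
    replace (C / (1 - k) * k ^ n) with (C * k ^ n / (1 - k)) by (field; lra).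
    apply (proj2_sig (Hx x)). }
  destruct (Hlim Re Cabs_Re (fun _ _ => eq_refl)) as [sr Hsr].
  destruct (Hlim Im Cabs_Im (fun _ _ => eq_refl)) as [si Hsi].
  exists (fun x => mkC (sr x) (si x)). split.
  - intros x. split.
    + apply (continuity_pt_uniform_limit (fun n y => Re (f n y)) sr (C / (1 - k)) k Hk); auto.
      intros n y. apply (Hf n y).
    + apply (continuity_pt_uniform_limit (fun n y => Im (f n y)) si (C / (1 - k)) k Hk); auto.
      intros n y. apply (Hf n y).
  - intros n x. eapply Rle_trans; [apply Cabs_le_Re_Im|].
    change (Re (Csub (f n x) (mkC (sr x) (si x)))) with (Re (f n x) - sr x).
    change (Im (Csub (f n x) (mkC (sr x) (si x)))) with (Im (f n x) - si x).
    generalize (Hsr n x) (Hsi n x). lra.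
Qed.

(** * The Riccati fixed point *)

Lemma inv_pred_bounds m : 2 < m ->
  0 < / (m - 1) < 1 /\ 1 < m - / (m - 1) /\ 1 <= / (m - 1) * (m - / (m - 1)).
Proof.
  intros Hm. assert (Hq : / (m - 1) * (m - 1) = 1) by (field; lra).
  assert (0 < / (m - 1)) by (apply Rinv_0_lt_compat; lra).
  assert (/ (m - 1) < 1) by nra.
  split; [lra|split; [lra|nra]].
Qed.

Section RiccatiFixedPoint.
Variables (g : R -> Cplx) (beta m : R).
Hypothesis Hm : 2 < m.
Hypothesis Hg_cont : Ccont g.
Hypothesis Hg_ge : forall x, m <= Cabs (g x).
Hypothesis Hg_per : forall x, g (x + 1) = g x.

Let q := / (m - 1).

Definition riccati (f : R -> Cplx) : R -> Cplx := fun x => Cinv (Csub (g x) (f (x + beta))).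

Definition riccati_iter (n : nat) : R -> Cplx := Nat.iter n riccati (fun _ => RtoC 0).

Lemma riccati_denominator_ge (f : R -> Cplx) x : (forall y, Cabs (f y) <= q) ->
  m - q <= Cabs (Csub (g x) (f (x + beta))).
Proof.
  intros Hf. eapply Rle_trans; [|apply Cabs_sub_ge]. generalize (Hg_ge x) (Hf (x + beta)). lra.
Qed.

Lemma riccati_bound (f : R -> Cplx) x : (forall y, Cabs (f y) <= q) -> Cabs (riccati f x) <= q.
Proof.
  intros Hf. destruct (inv_pred_bounds m Hm) as [Hq [Hl Hql]]. fold q in Hq, Hl, Hql.
  assert (Hd := riccati_denominator_ge f x Hf). unfold riccati.
  rewrite Cabs_inv by lra.
  apply Rmult_le_reg_l with (Cabs (Csub (g x) (f (x + beta)))); [lra|].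
  rewrite Rinv_r by lra. nra.
Qed.

(* Both denominators have modulus at least [m - q >= 1/q]. *)
Lemma riccati_lipschitz (f1 f2 : R -> Cplx) x :
  (forall y, Cabs (f1 y) <= q) -> (forall y, Cabs (f2 y) <= q) ->
  Cabs (Csub (riccati f1 x) (riccati f2 x)) <= q ^ 2 * Cabs (Csub (f1 (x + beta)) (f2 (x + beta))).
Proof.
  intros H1 H2. destruct (inv_pred_bounds m Hm) as [Hq [Hl Hql]]. fold q in Hq, Hl, Hql.
  assert (D1 := riccati_denominator_ge f1 x H1). assert (D2 := riccati_denominator_ge f2 x H2).
  unfold riccati. rewrite Cabs_sub_inv by lra.
  replace (Csub (Csub (g x) (f1 (x + beta))) (Csub (g x) (f2 (x + beta))))
    with (Csub (f2 (x + beta)) (f1 (x + beta))) by (Cplx_ring; ring).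
  rewrite Cabs_sub_sym.
  set (c := Cabs (Csub (f1 (x + beta)) (f2 (x + beta)))). assert (0 <= c) by apply Cabs_ge0.
  set (d1 := Cabs (Csub (g x) (f1 (x + beta)))) in *.
  set (d2 := Cabs (Csub (g x) (f2 (x + beta)))) in *.
  unfold Rdiv. apply Rmult_le_reg_r with (d1 * d2); [nra|].
  rewrite Rmult_assoc, Rinv_l by nra.
  assert (1 <= q * d1) by nra. assert (1 <= q * d2) by nra.
  assert (1 <= (q * d1) * (q * d2)) by nra. nra.
Qed.

Lemma riccati_iter_props n : Ccont (riccati_iter n) /\ (forall y, Cabs (riccati_iter n y) <= q) /\
  (forall y, riccati_iter n (y + 1) = riccati_iter n y).
Proof.
  destruct (inv_pred_bounds m Hm) as [Hq [Hl Hql]]. fold q in Hq, Hl, Hql.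
  induction n as [|n [Hc [Hb Hp]]]; simpl.
  - split; [apply Ccont_const|split; [|reflexivity]]. intros; rewrite Cabs_RtoC, Rabs_R0; lra.
  - split; [|split].
    + apply Ccont_inv.
      * apply Ccont_sub; auto. apply Ccont_shift; auto.
      * intros x; generalize (riccati_denominator_ge _ x Hb); lra.
    + intros y; apply riccati_bound; auto.
    + intros y; unfold riccati. rewrite Hg_per.
      replace (y + 1 + beta) with ((y + beta) + 1) by ring. fold (riccati_iter n). rewrite Hp.
      reflexivity.
Qed.

Lemma riccati_iter_step n x :
  Cabs (Csub (riccati_iter (S n) x) (riccati_iter n x)) <= q * (q ^ 2) ^ n.
Proof.
  destruct (inv_pred_bounds m Hm) as [Hq [Hl Hql]]. fold q in Hq, Hl, Hql.
  revert x; induction n; intros x.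
  - simpl. rewrite Csub_0_r, Rmult_1_r. apply riccati_bound.
    intros; rewrite Cabs_RtoC, Rabs_R0; lra.
  - change (Cabs (Csub (riccati (riccati_iter (S n)) x) (riccati (riccati_iter n) x))
      <= q * (q ^ 2) ^ S n).
    eapply Rle_trans; [apply riccati_lipschitz; apply riccati_iter_props|].
    replace (q * (q ^ 2) ^ S n) with (q ^ 2 * (q * (q ^ 2) ^ n)) by (simpl; ring).
    apply Rmult_le_compat_l; [nra|apply IHn].
Qed.

Theorem riccati_fixed_point : exists s : R -> Cplx, Ccont s /\ (forall x, Cabs (s x) <= q) /\
  (forall x, s (x + 1) = s x) /\ (forall x, s x = riccati s x).
Proof.
  destruct (inv_pred_bounds m Hm) as [Hq [Hl Hql]]. fold q in Hq, Hl, Hql.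
  set (k := q ^ 2). assert (Hk : 0 <= k < 1) by (unfold k; split; nra).
  assert (Hkn : forall n, 0 <= k ^ n) by (intros; apply pow_le; lra).
  destruct (Ccont_geometric_limit riccati_iter q k Hk) as [s [Hs_cont Hs_lim]].
  { intros n; apply riccati_iter_props. }
  { intros n x; apply riccati_iter_step. }
  set (D := 2 * (q / (1 - k))) in Hs_lim.
  assert (Hs_bound : forall x, Cabs (s x) <= q).
  { intros x. enough (Cabs (s x) - q <= 0) by lra.
    apply (le0_of_le_geometric _ D k Hk). intros n.
    assert (H1 := Cabs_sub_ge (s x) (riccati_iter n x)). rewrite Cabs_sub_sym in H1.
    generalize (Hs_lim n x) (proj1 (proj2 (riccati_iter_props n)) x). lra. }
  exists s. split; [exact Hs_cont|split; [exact Hs_bound|split]].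
  - intros x. apply Cabs_sub_le0, (le0_of_le_geometric _ (2 * D) k Hk). intros n.
    eapply Rle_trans; [apply (Cabs_sub_triangle _ (riccati_iter n (x + 1)))|].
    generalize (Hs_lim n (x + 1)) (Hs_lim n x).
    rewrite Cabs_sub_sym, !(proj2 (proj2 (riccati_iter_props n))). lra.
  - intros x. apply Cabs_sub_le0, (le0_of_le_geometric _ (2 * D) k Hk). intros n.
    eapply Rle_trans; [apply (Cabs_sub_triangle _ (riccati_iter (S n) x))|].
    rewrite Cabs_sub_sym.
    assert (Hstep : Cabs (Csub (riccati (riccati_iter n) x) (riccati s x)) <= k * (D * k ^ n)).
    { eapply Rle_trans; [apply riccati_lipschitz; [apply riccati_iter_props|exact Hs_bound]|].
      apply Rmult_le_compat_l; [unfold k; nra|]. apply Hs_lim. }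
    change (riccati_iter (S n) x) with (riccati (riccati_iter n) x).
    generalize (Hs_lim (S n) x). simpl. fold k.
    assert (0 <= D * k ^ n) by (unfold D; generalize (Hkn n); apply Rmult_le_pos;
                                 apply Rmult_le_pos; [lra|apply Rdiv_le_0_compat; lra]).
    intros. nra.
Qed.

End RiccatiFixedPoint.

Definition C2add (p r : C2) : C2 := (Cadd (fst p) (fst r), Cadd (snd p) (snd r)).

Lemma vnorm_le_sum u : vnorm u <= Cabs (fst u) + Cabs (snd u).
Proof. generalize (Cabs_ge0 (fst u)) (Cabs_ge0 (snd u)). intros. apply sqrt_le_of_le_sq; nra. Qed.

Lemma Cabs_fst_le_vnorm u : Cabs (fst u) <= vnorm u.
Proof. apply le_sqrt_of_sq_le; [apply Cabs_ge0|]. generalize (pow2_ge_0 (Cabs (snd u))); lra. Qed.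

Lemma Cabs_snd_le_vnorm u : Cabs (snd u) <= vnorm u.
Proof. apply le_sqrt_of_sq_le; [apply Cabs_ge0|]. generalize (pow2_ge_0 (Cabs (fst u))); lra. Qed.

(* A pair of moduli is itself a complex number, so the triangle inequality in [C^2]
   follows from the one in [C]. *)
Lemma vnorm_triangle p r : vnorm (C2add p r) <= vnorm p + vnorm r.
Proof.
  unfold vnorm, C2add; cbn [fst snd].
  assert (H1 := Cabs_triangle (fst p) (fst r)). assert (H2 := Cabs_triangle (snd p) (snd r)).
  eapply Rle_trans.
  { apply sqrt_le_1_alt, Rplus_le_compat; apply pow_incr; split; eauto using Cabs_ge0. }
  exact (Cabs_triangle (Cabs (fst p), Cabs (snd p)) (Cabs (fst r), Cabs (snd r))).
Qed.

Lemma vnorm_scale c u : vnorm (vscale c u) = Cabs c * vnorm u.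
Proof.
  unfold vnorm, vscale; cbn [fst snd]. rewrite !Cabs_mul.
  replace ((Cabs c * Cabs (fst u)) ^ 2 + (Cabs c * Cabs (snd u)) ^ 2) with
    (Cabs c ^ 2 * (Cabs (fst u) ^ 2 + Cabs (snd u) ^ 2)) by ring.
  rewrite sqrt_mult_alt by apply pow2_ge_0. rewrite sqrt_pow2 by apply Cabs_ge0. reflexivity.
Qed.

Lemma vnorm_1_z_bounds (z : Cplx) : Cabs z <= 1 ->
  1 <= vnorm (RtoC 1, z) <= sqrt 2 /\ 1 <= vnorm (z, RtoC 1) <= sqrt 2.
Proof.
  intros H. assert (0 <= Cabs z) by apply Cabs_ge0.
  unfold vnorm; cbn [fst snd]. rewrite Cabs_RtoC, Rabs_R1.
  repeat split; first [apply le_sqrt_of_sq_le; [lra|] | apply sqrt_le_1_alt]; nra.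
Qed.

Definition ent11 (A : M2) := fst (fst A).
Definition ent12 (A : M2) := snd (fst A).
Definition ent21 (A : M2) := fst (snd A).
Definition ent22 (A : M2) := snd (snd A).

Definition mnorm (A : M2) := Cabs (ent11 A) + Cabs (ent12 A) + Cabs (ent21 A) + Cabs (ent22 A).

Definition Mdiff (A B : M2) : M2 :=
  mk2 (Csub (ent11 A) (ent11 B)) (Csub (ent12 A) (ent12 B))
      (Csub (ent21 A) (ent21 B)) (Csub (ent22 A) (ent22 B)).

Lemma mapply_ent A u : mapply A u =
  (Cadd (Cmul (ent11 A) (fst u)) (Cmul (ent12 A) (snd u)),
   Cadd (Cmul (ent21 A) (fst u)) (Cmul (ent22 A) (snd u))).
Proof. destruct A as [[a b] [c d]]; reflexivity. Qed.

Lemma vnorm_mapply_le A u : vnorm (mapply A u) <= mnorm A * vnorm u.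
Proof.
  rewrite mapply_ent. eapply Rle_trans; [apply vnorm_le_sum|]. cbn [fst snd].
  assert (H1 := Cabs_fst_le_vnorm u). assert (H2 := Cabs_snd_le_vnorm u).
  assert (G : forall a b c d, Cabs (Cadd (Cmul a b) (Cmul c d)) <= Cabs a * Cabs b + Cabs c * Cabs d)
    by (intros; rewrite <- !Cabs_mul; apply Cabs_triangle).
  generalize (G (ent11 A) (fst u) (ent12 A) (snd u)) (G (ent21 A) (fst u) (ent22 A) (snd u)).
  unfold mnorm. generalize (Cabs_ge0 (ent11 A)) (Cabs_ge0 (ent12 A)) (Cabs_ge0 (ent21 A))
    (Cabs_ge0 (ent22 A)). intros. nra.
Qed.

Lemma opnorm_is_lub A :
  is_lub (fun t => exists u : C2, vnorm u = 1 /\ t = vnorm (mapply A u)) (opnorm A).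
Proof.
  unfold opnorm. apply epsilon_spec.
  destruct (completeness (fun t => exists u : C2, vnorm u = 1 /\ t = vnorm (mapply A u)))
    as [l Hl]; [| |exists l; exact Hl].
  - exists (mnorm A). intros t [u [Hu ->]]. rewrite <- (Rmult_1_r (mnorm A)), <- Hu.
    apply vnorm_mapply_le.
  - exists (vnorm (mapply A (RtoC 1, RtoC 0))), (RtoC 1, RtoC 0). split; auto.
    unfold vnorm; cbn [fst snd]. rewrite !Cabs_RtoC, Rabs_R1, Rabs_R0.
    replace (1 ^ 2 + 0 ^ 2) with 1 by ring. apply sqrt_1.
Qed.

Lemma vnorm_mapply_le_opnorm A u : vnorm u = 1 -> vnorm (mapply A u) <= opnorm A.
Proof. intros Hu. apply (proj1 (opnorm_is_lub A)). exists u; auto. Qed.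

Lemma opnorm_le_of_bound A M : (forall u, vnorm u = 1 -> vnorm (mapply A u) <= M) -> opnorm A <= M.
Proof. intros H. apply (proj2 (opnorm_is_lub A)). intros t [u [Hu ->]]. auto. Qed.

Lemma opnorm_le_add_mnorm A B : opnorm A <= opnorm B + mnorm (Mdiff A B).
Proof.
  apply opnorm_le_of_bound. intros u Hu.
  replace (mapply A u) with (C2add (mapply B u) (mapply (Mdiff A B) u)).
  - eapply Rle_trans; [apply vnorm_triangle|]. apply Rplus_le_compat.
    + apply vnorm_mapply_le_opnorm; auto.
    + rewrite <- (Rmult_1_r (mnorm _)), <- Hu. apply vnorm_mapply_le.
  - rewrite !mapply_ent. unfold C2add, Mdiff, mk2, ent11, ent12, ent21, ent22; cbn [fst snd].
    f_equal; Cplx_ring; ring.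
Qed.

Lemma mnorm_Mdiff_sym A B : mnorm (Mdiff A B) = mnorm (Mdiff B A).
Proof.
  unfold mnorm, Mdiff, mk2, ent11, ent12, ent21, ent22; cbn [fst snd].
  rewrite !(Cabs_sub_sym (fst (fst A))), !(Cabs_sub_sym (snd (fst A))),
    !(Cabs_sub_sym (fst (snd A))), !(Cabs_sub_sym (snd (snd A))). reflexivity.
Qed.

Lemma opnorm_dist_le A B : Rabs (opnorm A - opnorm B) <= mnorm (Mdiff A B).
Proof.
  generalize (opnorm_le_add_mnorm A B) (opnorm_le_add_mnorm B A).
  rewrite (mnorm_Mdiff_sym B A). intros; apply Rabs_le; lra.
Qed.

Lemma mapply_mmul A B w : mapply (mmul A B) w = mapply A (mapply B w).
Proof.
  destruct A as [[a b] [c d]], B as [[a' b'] [c' d']], w as [w1 w2].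
  unfold mmul, mapply, mk2; cbn [fst snd]. f_equal; Cplx_ring; ring.
Qed.

Lemma mapply_vscale A c w : mapply A (vscale c w) = vscale c (mapply A w).
Proof.
  destruct A as [[a b] [c' d]], w as [w1 w2].
  unfold vscale, mapply; cbn [fst snd]. f_equal; Cplx_ring; ring.
Qed.

Lemma mapply_C2add A p r : mapply A (C2add p r) = C2add (mapply A p) (mapply A r).
Proof.
  destruct A as [[a b] [c' d]], p as [p1 p2], r as [r1 r2].
  unfold C2add, mapply; cbn [fst snd]. f_equal; Cplx_ring; ring.
Qed.

Lemma mapply_mid w : mapply mid w = w.
Proof.
  destruct w as [w1 w2]. unfold mid, mk2, mapply; cbn [fst snd]. f_equal; Cplx_ring; ring.
Qed.

Lemma vscale_vscale c d w : vscale c (vscale d w) = vscale (Cmul c d) w.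
Proof. destruct w as [w1 w2]. unfold vscale; cbn [fst snd]. f_equal; Cplx_ring; ring. Qed.

Definition Mcont (A : R -> M2) : Prop :=
  Ccont (fun x => ent11 (A x)) /\ Ccont (fun x => ent12 (A x)) /\
  Ccont (fun x => ent21 (A x)) /\ Ccont (fun x => ent22 (A x)).

Lemma continuity_pt_opnorm (A : R -> M2) : Mcont A -> forall x, continuity_pt (fun y => opnorm (A y)) x.
Proof.
  intros [H1 [H2 [H3 H4]]] x e He.
  assert (Hc : continuity_pt (fun y => mnorm (Mdiff (A y) (A x))) x).
  { unfold mnorm, Mdiff, mk2, ent11, ent12, ent21, ent22 at 1; cbn [fst snd].
    repeat apply continuity_pt_plus; apply (continuity_pt_Cabs (fun y => Csub _ _));
      apply Ccont_sub; auto; apply Ccont_const. }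
  destruct (Hc e He) as [d [Hd Hy]]. exists d; split; auto. intros y Hxy.
  specialize (Hy y Hxy). simpl in *. unfold R_dist in *.
  assert (H0 : mnorm (Mdiff (A x) (A x)) = 0).
  { unfold mnorm, Mdiff, mk2, ent11, ent12, ent21, ent22; cbn [fst snd].
    rewrite !Csub_self, Cabs_RtoC, Rabs_R0. ring. }
  rewrite H0, Rminus_0_r in Hy.
  eapply Rle_lt_trans; [apply opnorm_dist_le|]. eapply Rle_lt_trans; [apply RRle_abs|exact Hy].
Qed.

Lemma Mcont_mmul (A B : R -> M2) : Mcont A -> Mcont B -> Mcont (fun x => mmul (A x) (B x)).
Proof.
  intros [A1 [A2 [A3 A4]]] [B1 [B2 [B3 B4]]].
  assert (E : forall x, mmul (A x) (B x) =
    mk2 (Cadd (Cmul (ent11 (A x)) (ent11 (B x))) (Cmul (ent12 (A x)) (ent21 (B x))))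
        (Cadd (Cmul (ent11 (A x)) (ent12 (B x))) (Cmul (ent12 (A x)) (ent22 (B x))))
        (Cadd (Cmul (ent21 (A x)) (ent11 (B x))) (Cmul (ent22 (A x)) (ent21 (B x))))
        (Cadd (Cmul (ent21 (A x)) (ent12 (B x))) (Cmul (ent22 (A x)) (ent22 (B x))))).
  { intros x; destruct (A x) as [[? ?] [? ?]], (B x) as [[? ?] [? ?]]; reflexivity. }
  split; [|split; [|split]]; (eapply Ccont_ext; [intros y; rewrite E; reflexivity|]);
    apply Ccont_add; apply Ccont_mul; auto.
Qed.

Lemma Mcont_cocycle_iter (A : R -> M2) alpha n : Mcont A -> Mcont (cocycle_iter alpha A n).
Proof.
  intros HA. induction n; simpl.
  - repeat split; apply Ccont_const.
  - apply (Mcont_mmul (fun x => A (x + INR n * alpha))); auto.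
    destruct HA as [A1 [A2 [A3 A4]]]. repeat split; apply (Ccont_shift (fun x => _ (A x))); auto.
Qed.

(** * Integrals over a period *)

Lemma ex_RInt_continuous_R (f : R -> R) a b : (forall x, continuity_pt f x) -> ex_RInt f a b.
Proof.
  intros H. apply (@ex_RInt_continuous R_CompleteNormedModule). intros z _.
  apply continuity_pt_filterlim. apply H.
Qed.

Lemma integral01_eq_RInt (f : R -> R) : (forall x, continuity_pt f x) -> integral01 f = RInt f 0 1.
Proof.
  intros H. unfold integral01.
  destruct (epsilon_spec (inhabits 0) (fun I => exists pr : Riemann_integrable f 0 1, RiemannInt pr = I))
    as [pr <-].
  - exists (RiemannInt (@continuity_implies_RiemannInt f 0 1 ltac:(lra) (fun x _ => H x))).
    eexists; reflexivity.
  - symmetry. apply RInt_Reals.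
Qed.

Lemma RInt_shift (f : R -> R) c a b : (forall x, continuity_pt f x) ->
  RInt (fun x => f (x + c)) a b = RInt f (a + c) (b + c).
Proof.
  intros H. assert (E := RInt_comp_lin f 1 c a b (ex_RInt_continuous_R f _ _ H)).
  rewrite !Rmult_1_l in E. rewrite <- E. apply RInt_ext. intros x _.
  change scal with Rmult. simpl. rewrite !Rmult_1_l. reflexivity.
Qed.

Lemma RInt_periodic_shift (f : R -> R) c : (forall x, continuity_pt f x) ->
  (forall x, f (x + 1) = f x) -> RInt (fun x => f (x + c)) 0 1 = RInt f 0 1.
Proof.
  intros H Hp. assert (Hex := fun a b => ex_RInt_continuous_R f a b H).
  rewrite RInt_shift, Rplus_0_l by auto.
  rewrite <- (RInt_Chasles f c 0 (1 + c)), <- (RInt_Chasles f 0 1 (1 + c)) by auto.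
  assert (E : RInt f 1 (1 + c) = RInt f 0 c).
  { rewrite <- (RInt_ext (fun x => f (x + 1)) f 0 c) by (intros; apply Hp).
    rewrite RInt_shift by auto. f_equal; ring. }
  rewrite E, <- (opp_RInt_swap f 0 c) by auto.
  unfold plus, opp; simpl; ring.
Qed.

Lemma RInt_01_bounds (f : R -> R) lo hi : (forall x, continuity_pt f x) ->
  (forall x, lo <= f x <= hi) -> lo <= RInt f 0 1 <= hi.
Proof.
  intros H Hb. assert (Hex := ex_RInt_continuous_R f 0 1 H).
  split.
  - assert (RInt (fun _ => lo) 0 1 <= RInt f 0 1)
      by (apply RInt_le; [lra|apply ex_RInt_const|auto|intros; apply Hb]).
    rewrite RInt_const in H0. change scal with Rmult in H0. lra.
  - assert (RInt f 0 1 <= RInt (fun _ => hi) 0 1)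
      by (apply RInt_le; [lra|auto|apply ex_RInt_const|intros; apply Hb]).
    rewrite RInt_const in H0. change scal with Rmult in H0. lra.
Qed.

Lemma periodic_IZR (F : R -> R) : (forall x, F (x + 1) = F x) -> forall k y, F (y + IZR k) = F y.
Proof.
  intros Hp.
  assert (Hnat : forall n y, F (y + INR n) = F y).
  { intros n; induction n; intros y; [rewrite Rplus_0_r; reflexivity|].
    rewrite S_INR. replace (y + (INR n + 1)) with ((y + INR n) + 1) by ring. rewrite Hp; auto. }
  intros k y. destruct (Z_le_gt_dec 0 k).
  - rewrite <- (Z2Nat.id k), <- INR_IZR_INZ by lia. apply Hnat.
  - replace k with (- Z.of_nat (Z.to_nat (- k)))%Z by lia. rewrite opp_IZR, <- INR_IZR_INZ.
    rewrite <- (Hnat (Z.to_nat (-k)) (y + - INR (Z.to_nat (- k)))). f_equal; ring.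
Qed.

Lemma minimum_le (F : R -> R) : (forall x, continuity_pt F x) -> (forall x, F (x + 1) = F x) ->
  forall x, minimum F <= F x.
Proof.
  intros Hc Hp.
  destruct (continuity_ab_min F 0 1 ltac:(lra) (fun c _ => Hc c)) as [x0 [Hx0 _]].
  unfold minimum.
  apply (epsilon_spec (inhabits 0) (fun r => (exists x, F x = r) /\ forall x, r <= F x)).
  exists (F x0). split; eauto. intros x.
  destruct (base_Int_part x) as [H1 H2].
  replace (F x) with (F (x - IZR (Int_part x))); [apply Hx0; lra|].
  rewrite <- (periodic_IZR F Hp (Int_part x)). f_equal; ring.
Qed.

Lemma Cabs_horizontal x y eps : Cabs (Csub (mkC y eps) (mkC x eps)) = Rabs (y - x).
Proof.
  unfold Cabs, Csub, Cadd, Copp, mkC, Re, Im; cbn [fst snd].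
  rewrite <- sqrt_Rsqr_abs. f_equal. unfold Rsqr; ring.
Qed.

Lemma holomorphic_horizontal_lipschitz (h : R) v eps x : holomorphic_on_strip h v -> Rabs eps < h ->
  exists C d, 0 < d /\ 0 <= C /\ forall y, Rabs (y - x) < d ->
    Cabs (Csub (v (mkC y eps)) (v (mkC x eps))) <= C * Rabs (y - x).
Proof.
  intros Hh He. destruct (Hh (mkC x eps) He) as [l Hl].
  destruct (Hl 1 ltac:(lra)) as [d [Hd Hw]].
  exists (Cabs l + 1), d. split; auto. split; [generalize (Cabs_ge0 l); lra|].
  intros y Hy. destruct (Req_dec y x) as [->|Hne].
  - rewrite Csub_self, Cabs_RtoC, Rminus_diag, Rabs_R0. lra.
  - set (dz := Csub (mkC y eps) (mkC x eps)).
    assert (Hdz : 0 < Cabs dz) by (unfold dz; rewrite Cabs_horizontal; apply Rabs_pos_lt; lra).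
    assert (Hw0 : mkC y eps <> mkC x eps) by (unfold mkC; intros Q; injection Q; lra).
    rewrite <- (Cabs_horizontal x y eps) in Hy. specialize (Hw _ Hw0 Hy). fold dz in Hw.
    set (Q := Cdiv (Csub (v (mkC y eps)) (v (mkC x eps))) dz) in Hw.
    rewrite <- (Cmul_Cdiv (Csub (v (mkC y eps)) (v (mkC x eps))) dz Hdz). fold Q.
    rewrite Cabs_mul, <- (Cabs_horizontal x y eps).
    apply Rmult_le_compat_r; [apply Cabs_ge0|]. generalize (Cabs_sub_ge Q l); lra.
Qed.

Lemma Ccont_holomorphic_horizontal h v eps : holomorphic_on_strip h v -> Rabs eps < h ->
  Ccont (fun x => v (mkC x eps)).
Proof.
  intros Hh He x.
  destruct (holomorphic_horizontal_lipschitz h v eps x Hh He) as [C [d [Hd [HC Hl]]]].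
  assert (Hnear : forall e, 0 < e -> exists d', 0 < d' /\ forall y, Rabs (y - x) < d' ->
            Cabs (Csub (v (mkC y eps)) (v (mkC x eps))) < e).
  { intros e He'. exists (Rmin d (e / (C + 1))). split.
    - apply Rmin_pos; [lra|apply Rdiv_lt_0_compat; lra].
    - intros y Hy. assert (Hy1 := Rlt_le_trans _ _ _ Hy (Rmin_l d (e / (C + 1)))).
      assert (Hy2 := Rlt_le_trans _ _ _ Hy (Rmin_r d (e / (C + 1)))).
      eapply Rle_lt_trans; [exact (Hl y Hy1)|]. assert (Hp := Rabs_pos (y - x)).
      apply Rle_lt_trans with ((C + 1) * Rabs (y - x)); [nra|].
      apply Rmult_lt_reg_r with (/ (C + 1)); [apply Rinv_0_lt_compat; lra|].
      replace ((C + 1) * Rabs (y - x) * / (C + 1)) with (Rabs (y - x)) by (field; lra).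
      replace (e * / (C + 1)) with (e / (C + 1)) by reflexivity. exact Hy2. }
  split; intros e He'; destruct (Hnear e He') as [d' [Hd' Hy]]; exists d'; split; auto;
    intros y [_ Hxy]; refine (Rle_lt_trans _ _ _ _ (Hy y Hxy)).
  - exact (Cabs_Re (Csub (v (mkC y eps)) (v (mkC x eps)))).
  - exact (Cabs_Im (Csub (v (mkC y eps)) (v (mkC x eps)))).
Qed.

Lemma horizontal_potential_props h v E eps (a : R -> Cplx) :
  real_analytic_on_T h v -> Rabs eps < h -> (forall x, a x = Csub (RtoC E) (v (mkC x eps))) ->
  Ccont a /\ (forall x, a (x + 1) = a x) /\ (forall x, m_val v E eps <= Cabs (a x)).
Proof.
  intros [_ [Hhol [Hper _]]] Heps Ha.
  replace a with (fun x => Csub (RtoC E) (v (mkC x eps))) by (extensionality x; auto).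
  assert (Ha_cont : Ccont (fun x => Csub (RtoC E) (v (mkC x eps))))
    by (apply Ccont_sub; [apply Ccont_const|apply (Ccont_holomorphic_horizontal h); auto]).
  assert (Ha_per : forall x, Csub (RtoC E) (v (mkC (x + 1) eps)) = Csub (RtoC E) (v (mkC x eps))).
  { intros x. rewrite <- (Hper (mkC x eps) Heps). do 2 f_equal. Cplx_ring; ring. }
  split; [exact Ha_cont|split; [exact Ha_per|]].
  apply (minimum_le (fun y => Cabs (Csub (RtoC E) (v (mkC y eps))))); [apply continuity_pt_Cabs; auto|].
  intros y; rewrite Ha_per; reflexivity.
Qed.

Fixpoint birkhoff_sum (phi : R -> R) (alpha : R) (n : nat) (x : R) : R :=
  match n with
  | O => 0
  | S k => birkhoff_sum phi alpha k x + phi (x + INR k * alpha)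
  end.

Lemma continuity_pt_birkhoff_sum phi alpha n : (forall x, continuity_pt phi x) ->
  forall x, continuity_pt (birkhoff_sum phi alpha n) x.
Proof.
  intros Hphi. induction n; intros x; simpl.
  - apply continuity_pt_const; intros ? ?; reflexivity.
  - apply (continuity_pt_plus _ (fun y => phi (y + INR n * alpha))); auto.
    apply continuity_pt_shift; auto.
Qed.

Lemma RInt_birkhoff_sum phi alpha n : (forall x, continuity_pt phi x) ->
  (forall x, phi (x + 1) = phi x) ->
  RInt (birkhoff_sum phi alpha n) 0 1 = INR n * RInt phi 0 1.
Proof.
  intros Hc Hp. induction n; simpl birkhoff_sum.
  - rewrite RInt_const. change scal with Rmult. simpl; ring.
  - assert (Hshift : forall x, continuity_pt (fun y => phi (y + INR n * alpha)) x)
      by (intros; apply continuity_pt_shift; auto).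
    rewrite (RInt_plus (birkhoff_sum phi alpha n) (fun x => phi (x + INR n * alpha)))
      by (apply ex_RInt_continuous_R; auto using continuity_pt_birkhoff_sum).
    change plus with Rplus. rewrite IHn, RInt_periodic_shift, S_INR by auto.
    rewrite Rmult_plus_distr_r, Rmult_1_l. reflexivity.
Qed.

Lemma Un_cv_mean_of_bounded_dist (I : nat -> R) c C :
  (forall n, Rabs (I n - INR n * c) <= C) -> Un_cv (fun n => / INR (S n) * I (S n)) c.
Proof.
  intros H e He.
  assert (HC : 0 <= C) by (generalize (H 0%nat) (Rabs_pos (I 0%nat - INR 0 * c)); lra).
  destruct (archimed_cor1 (e / (C + 1))) as [N [HN HN0]]; [apply Rdiv_lt_0_compat; lra|].
  exists N. intros n Hn. unfold R_dist.
  assert (HSn : 0 < INR (S n)) by (apply lt_0_INR; lia).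
  replace (/ INR (S n) * I (S n) - c) with (/ INR (S n) * (I (S n) - INR (S n) * c)) by (field; lra).
  rewrite Rabs_mult, Rabs_right by (apply Rle_ge, Rlt_le, Rinv_0_lt_compat; lra).
  assert (/ INR (S n) <= / INR N) by (apply Rinv_le_contravar; [apply lt_0_INR|apply le_INR]; lia).
  assert (0 < / INR (S n)) by (apply Rinv_0_lt_compat; lra).
  assert (Hd := H (S n)).
  apply Rle_lt_trans with (/ INR (S n) * (C + 1)); [nra|].
  apply Rlt_le_trans with (e / (C + 1) * (C + 1)); [|right; field; lra].
  apply Rmult_lt_compat_r; lra.
Qed.

Lemma C2_continuous_pair (f g : R -> Cplx) : Ccont f -> Ccont g -> C2_continuous (fun x => (f x, g x)).
Proof.
  intros Hf Hg x e He. cbn [fst snd].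
  assert (Hd : forall h : R -> Cplx, Ccont h -> exists d, 0 < d /\
            forall y, Rabs (y - x) < d -> Cabs (Csub (h y) (h x)) < e / 2).
  { intros h Hh. destruct (continuity_pt_Cabs (fun y => Csub (h y) (h x))
      (Ccont_sub _ _ Hh (Ccont_const (h x))) x (e / 2)) as [d [Hd Hy]]; [lra|].
    exists d; split; auto. intros y Hxy. destruct (Req_dec y x) as [->|Hne].
    - rewrite Csub_self, Cabs_RtoC, Rabs_R0; lra.
    - specialize (Hy y (conj (conj I (not_eq_sym Hne)) Hxy)). simpl in Hy. unfold R_dist in Hy.
      rewrite Csub_self, Cabs_RtoC, Rabs_R0, Rminus_0_r in Hy.
      eapply Rle_lt_trans; [apply RRle_abs|exact Hy]. }
  destruct (Hd f Hf) as [d1 [Hd1 H1]]. destruct (Hd g Hg) as [d2 [Hd2 H2]].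
  exists (Rmin d1 d2). split; [apply Rmin_pos; auto|]. intros y Hy.
  eapply Rle_lt_trans; [apply vnorm_le_sum|]. cbn [fst snd].
  generalize (H1 y (Rlt_le_trans _ _ _ Hy (Rmin_l _ _))) (H2 y (Rlt_le_trans _ _ _ Hy (Rmin_r _ _))).
  unfold Csub. lra.
Qed.

Lemma ln_ratio_bounds (A S D m q : R) : 2 < m -> m <= A -> 0 <= S <= q -> 0 < q < 1 ->
  A - S <= D <= A + S -> ln (1 - q / m) <= ln D - ln A <= ln (1 + q / m).
Proof.
  intros Hm HA HS Hq HD.
  assert (Ht : 0 < q / m < 1 / 2).
  { split; [apply Rdiv_lt_0_compat; lra|]. apply Rmult_lt_reg_r with m; [lra|]. field_simplify; lra. }
  assert (HqA : q <= A * (q / m)) by (apply Rmult_le_reg_r with m; [lra|]; field_simplify; nra).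
  assert (0 < A * (1 - q / m)) by nra.
  split.
  - assert (ln (A * (1 - q / m)) <= ln D) by (apply ln_le; nra).
    rewrite ln_mult in H0 by lra. lra.
  - assert (ln D <= ln (A * (1 + q / m))) by (apply ln_le; nra).
    rewrite ln_mult in H0 by lra. lra.
Qed.

(** * The Schroedinger cocycle with a large potential *)

Section LargePotentialCocycle.
Variables (a s u : R -> Cplx) (alpha m : R).
Let q := / (m - 1).
Let lam := m - q.

Hypothesis Hm : 2 < m.
Hypothesis Ha_cont : Ccont a.
Hypothesis Ha_per : forall x, a (x + 1) = a x.
Hypothesis Ha_ge : forall x, m <= Cabs (a x).
Hypothesis Hs_cont : Ccont s.
Hypothesis Hs_per : forall x, s (x + 1) = s x.
Hypothesis Hs_bound : forall x, Cabs (s x) <= q.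
Hypothesis Hs_inv : forall x, s (x + alpha) = Cinv (Csub (a x) (s x)).
Hypothesis Hu_cont : Ccont u.
Hypothesis Hu_per : forall x, u (x + 1) = u x.
Hypothesis Hu_bound : forall x, Cabs (u x) <= q.
Hypothesis Hu_inv : forall x, u x = Cinv (Csub (a x) (u (x + alpha))).

Definition Bm (x : R) : M2 := mk2 (a x) (RtoC (-1)) (RtoC 1) (RtoC 0).
Definition eu (x : R) : C2 := (RtoC 1, s x).
Definition es (x : R) : C2 := (u x, RtoC 1).

Fixpoint growth_u (n : nat) (x : R) : Cplx :=
  match n with
  | O => RtoC 1
  | S k => Cmul (growth_u k x) (Csub (a (x + INR k * alpha)) (s (x + INR k * alpha)))
  end.

Fixpoint growth_s (n : nat) (x : R) : Cplx :=
  match n with O => RtoC 1 | S k => Cmul (growth_s k x) (u (x + INR k * alpha)) end.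

Lemma q_lam_bounds : 0 < q < 1 /\ 1 < lam /\ 1 <= q * lam.
Proof. exact (inv_pred_bounds m Hm). Qed.

Lemma lam_le_Cabs_a_sub_s x : lam <= Cabs (Csub (a x) (s x)).
Proof. eapply Rle_trans; [|apply Cabs_sub_ge]. generalize (Ha_ge x) (Hs_bound x). unfold lam; lra. Qed.

Lemma lam_le_Cabs_a_sub_u x : lam <= Cabs (Csub (a x) (u (x + alpha))).
Proof.
  eapply Rle_trans; [|apply Cabs_sub_ge]. generalize (Ha_ge x) (Hu_bound (x + alpha)). unfold lam; lra.
Qed.

Lemma Bm_eu x : mapply (Bm x) (eu x) = vscale (Csub (a x) (s x)) (eu (x + alpha)).
Proof.
  assert (H := lam_le_Cabs_a_sub_s x). destruct q_lam_bounds as [_ [Hl _]].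
  unfold Bm, eu. rewrite Hs_inv. assert (H0 := Cabs_gt0_sum_sq (Csub (a x) (s x)) ltac:(lra)).
  clear H.
  destruct (a x) as [a1 a2], (s x) as [s1 s2]. unfold Csub, Cadd, Copp, Re, Im in *; cbn [fst snd] in *.
  unfold mapply, mk2, vscale; cbn [fst snd]. f_equal; Cplx_ring; field; lra.
Qed.

Lemma Bm_es x : mapply (Bm x) (es x) = vscale (u x) (es (x + alpha)).
Proof.
  assert (H := lam_le_Cabs_a_sub_u x). destruct q_lam_bounds as [_ [Hl _]].
  unfold Bm, es. rewrite Hu_inv. assert (H0 := Cabs_gt0_sum_sq (Csub (a x) (u (x + alpha))) ltac:(lra)).
  clear H.
  destruct (a x) as [a1 a2], (u (x + alpha)) as [s1 s2].
  unfold Csub, Cadd, Copp, Re, Im in *; cbn [fst snd] in *.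
  unfold mapply, mk2, vscale; cbn [fst snd]. f_equal; Cplx_ring; field; lra.
Qed.

Lemma cocycle_iter_eu n x :
  mapply (cocycle_iter alpha Bm n x) (eu x) = vscale (growth_u n x) (eu (x + INR n * alpha)).
Proof.
  induction n; cbn [cocycle_iter growth_u].
  - rewrite mapply_mid, Rmult_0_l, Rplus_0_r. destruct (eu x). unfold vscale; cbn [fst snd].
    f_equal; Cplx_ring; ring.
  - rewrite mapply_mmul, IHn, mapply_vscale, Bm_eu, vscale_vscale, S_INR.
    replace (x + INR n * alpha + alpha) with (x + (INR n + 1) * alpha) by ring. reflexivity.
Qed.

Lemma cocycle_iter_es n x :
  mapply (cocycle_iter alpha Bm n x) (es x) = vscale (growth_s n x) (es (x + INR n * alpha)).
Proof.
  induction n; cbn [cocycle_iter growth_s].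
  - rewrite mapply_mid, Rmult_0_l, Rplus_0_r. destruct (es x). unfold vscale; cbn [fst snd].
    f_equal; Cplx_ring; ring.
  - rewrite mapply_mmul, IHn, mapply_vscale, Bm_es, vscale_vscale, S_INR.
    replace (x + INR n * alpha + alpha) with (x + (INR n + 1) * alpha) by ring. reflexivity.
Qed.

Lemma Cabs_growth_u_ge n x : lam ^ n <= Cabs (growth_u n x).
Proof.
  destruct q_lam_bounds as [_ [Hl _]].
  induction n; simpl; [rewrite Cabs_RtoC, Rabs_R1; lra|].
  rewrite Cabs_mul. generalize (lam_le_Cabs_a_sub_s (x + INR n * alpha)).
  assert (0 <= lam ^ n) by (apply pow_le; lra). nra.
Qed.

Lemma Cabs_growth_u_gt0 n x : 0 < Cabs (growth_u n x).
Proof.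
  destruct q_lam_bounds as [_ [Hl _]].
  eapply Rlt_le_trans; [|apply Cabs_growth_u_ge]. apply pow_lt; lra.
Qed.

Lemma Cabs_growth_s_le n x : Cabs (growth_s n x) <= / lam ^ n.
Proof.
  destruct q_lam_bounds as [_ [Hl _]].
  assert (Hu_small : forall y, Cabs (u y) <= / lam).
  { intros y. rewrite Hu_inv, Cabs_inv by (generalize (lam_le_Cabs_a_sub_u y); lra).
    apply Rinv_le_contravar; [lra|apply lam_le_Cabs_a_sub_u]. }
  rewrite <- pow_inv. induction n; simpl; [rewrite Cabs_RtoC, Rabs_R1; lra|].
  rewrite Cabs_mul. assert (H := Hu_small (x + INR n * alpha)).
  generalize (Cabs_ge0 (growth_s n x)) (Cabs_ge0 (u (x + INR n * alpha))).
  assert (0 <= (/ lam) ^ n) by (apply pow_le, Rlt_le, Rinv_0_lt_compat; lra). nra.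
Qed.

Lemma vnorm_eu_bounds x : 1 <= vnorm (eu x) <= sqrt 2.
Proof. apply vnorm_1_z_bounds. destruct q_lam_bounds. generalize (Hs_bound x); lra. Qed.

Lemma vnorm_es_bounds x : 1 <= vnorm (es x) <= sqrt 2.
Proof. apply vnorm_1_z_bounds. destruct q_lam_bounds. generalize (Hu_bound x); lra. Qed.

Lemma one_lt_sqrt2 : 1 < sqrt 2.
Proof. rewrite <- sqrt_1. apply sqrt_lt_1_alt; lra. Qed.

Lemma cocycle_expands_eu x n w : span (eu x) w ->
  vnorm (mapply (cocycle_iter alpha Bm n x) w) >= / sqrt 2 * lam ^ n * vnorm w.
Proof.
  intros [c ->]. rewrite mapply_vscale, cocycle_iter_eu, !vnorm_scale.
  destruct (vnorm_eu_bounds x) as [E1 E2]. destruct (vnorm_eu_bounds (x + INR n * alpha)) as [E3 E4].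
  assert (HP := Cabs_growth_u_ge n x). assert (Hs2 := one_lt_sqrt2).
  assert (0 <= Cabs c) by apply Cabs_ge0.
  assert (0 <= lam ^ n) by (destruct q_lam_bounds as [_ [Hl _]]; apply pow_le; lra).
  assert (/ sqrt 2 * vnorm (eu x) <= 1).
  { apply Rmult_le_reg_l with (sqrt 2); [lra|]. rewrite <- Rmult_assoc, Rinv_r by lra. lra. }
  apply Rle_ge, Rle_trans with (Cabs c * lam ^ n).
  - replace (/ sqrt 2 * lam ^ n * (Cabs c * vnorm (eu x)))
      with ((/ sqrt 2 * vnorm (eu x)) * (Cabs c * lam ^ n)) by ring.
    assert (0 <= Cabs c * lam ^ n) by nra. nra.
  - apply Rmult_le_compat_l; [lra|]. nra.
Qed.

Lemma cocycle_contracts_es x n w : span (es x) w ->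
  vnorm (mapply (cocycle_iter alpha Bm n x) w) <= sqrt 2 * / lam ^ n * vnorm w.
Proof.
  intros [c ->]. rewrite mapply_vscale, cocycle_iter_es, !vnorm_scale.
  destruct (vnorm_es_bounds x) as [E1 E2]. destruct (vnorm_es_bounds (x + INR n * alpha)) as [E3 E4].
  assert (HP := Cabs_growth_s_le n x). assert (Hs2 := one_lt_sqrt2).
  assert (0 <= Cabs c) by apply Cabs_ge0.
  assert (0 <= Cabs (growth_s n x)) by apply Cabs_ge0.
  assert (Cabs c * Cabs (growth_s n x) <= Cabs c * / lam ^ n) by nra.
  apply Rle_trans with (Cabs c * / lam ^ n * sqrt 2); [rewrite <- Rmult_assoc; apply Rmult_le_compat; nra|].
  assert (0 <= Cabs c * / lam ^ n) by nra.
  replace (sqrt 2 * / lam ^ n * (Cabs c * vnorm (es x)))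
    with ((Cabs c * / lam ^ n) * (sqrt 2 * vnorm (es x))) by ring.
  apply Rmult_le_compat_l; nra.
Qed.

(* [|s u| <= q^2 < 1], so [(1, s)] and [(u, 1)] are never parallel. *)
Lemma Cabs_1_sub_s_u_ge x : 1 - q ^ 2 <= Cabs (Csub (RtoC 1) (Cmul (s x) (u x))).
Proof.
  eapply Rle_trans; [|apply Cabs_sub_ge]. rewrite Cabs_RtoC, Rabs_R1, Cabs_mul.
  generalize (Hs_bound x) (Hu_bound x) (Cabs_ge0 (s x)) (Cabs_ge0 (u x)). fold q. intros. nra.
Qed.

Theorem Bm_uniformly_hyperbolic : uniformly_hyperbolic alpha Bm.
Proof.
  destruct q_lam_bounds as [Hq [Hl _]].
  exists eu, es, (sqrt 2), lam.
  split; [apply C2_continuous_pair; auto using Ccont_const|].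
  split; [apply C2_continuous_pair; auto using Ccont_const|].
  split.
  { intros x; split; intros Q; [apply (f_equal fst) in Q|apply (f_equal snd) in Q];
      cbn in Q; injection Q; lra. }
  split.
  { intros x Hz. assert (H := Cabs_1_sub_s_u_ge x).
    replace (Csub (RtoC 1) (Cmul (s x) (u x))) with
      (Csub (Cmul (fst (eu x)) (snd (es x))) (Cmul (snd (eu x)) (fst (es x)))) in H
      by (unfold eu, es; cbn [fst snd]; Cplx_ring; ring).
    rewrite Hz, Cabs_RtoC, Rabs_R0 in H. nra. }
  split.
  { intros x; split; exists (RtoC 1); unfold eu, es, vscale; cbn [fst snd];
      rewrite ?Hs_per, ?Hu_per; f_equal; Cplx_ring; ring. }
  split.
  { intros x; split; [exists (Csub (a x) (s x)); apply Bm_eu|exists (u x); apply Bm_es]. }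
  split; [apply Rlt_trans with 1; [lra|apply one_lt_sqrt2]|].
  split; [exact Hl|].
  split; [apply cocycle_expands_eu|apply cocycle_contracts_es].
Qed.

Lemma opnorm_cocycle_ge n x : Cabs (growth_u n x) / sqrt 2 <= opnorm (cocycle_iter alpha Bm n x).
Proof.
  destruct (vnorm_eu_bounds x) as [H1 H2]. assert (Hs2 := one_lt_sqrt2).
  set (w := vscale (RtoC (/ vnorm (eu x))) (eu x)).
  assert (Hinv : 0 < / vnorm (eu x)) by (apply Rinv_0_lt_compat; lra).
  assert (Hw : vnorm w = 1).
  { unfold w. rewrite vnorm_scale, Cabs_RtoC, Rabs_right by lra. field; lra. }
  eapply Rle_trans; [|apply (vnorm_mapply_le_opnorm _ w Hw)].
  unfold w. rewrite mapply_vscale, cocycle_iter_eu, !vnorm_scale, Cabs_RtoC, Rabs_right by lra.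
  destruct (vnorm_eu_bounds (x + INR n * alpha)) as [H3 H4].
  assert (Hp := Cabs_ge0 (growth_u n x)).
  assert (/ sqrt 2 <= / vnorm (eu x)) by (apply Rinv_le_contravar; lra).
  assert (0 < / sqrt 2) by (apply Rinv_0_lt_compat; lra).
  unfold Rdiv. rewrite Rmult_comm. apply Rmult_le_compat; nra.
Qed.

Lemma eu_es_decomposition (w : C2) x :
  let D := Csub (RtoC 1) (Cmul (s x) (u x)) in
  w = C2add (vscale (Cmul (Cinv D) (Csub (fst w) (Cmul (u x) (snd w)))) (eu x))
            (vscale (Cmul (Cinv D) (Csub (snd w) (Cmul (s x) (fst w)))) (es x)).
Proof.
  intros D. destruct q_lam_bounds as [Hq _].
  assert (HD := Cabs_gt0_sum_sq D ltac:(generalize (Cabs_1_sub_s_u_ge x); fold D; nra)).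
  unfold D in *. unfold eu, es.
  destruct w as [w1 w2]. destruct (s x) as [s1 s2], (u x) as [u1 u2].
  unfold Csub, Cadd, Copp, Cmul, RtoC, Re, Im in HD; cbn [fst snd] in HD.
  unfold C2add, vscale; cbn [fst snd]. f_equal; Cplx_ring; field; lra.
Qed.

Lemma Cabs_decomposition_coef_le x (z1 z2 t : Cplx) : Cabs z1 <= 1 -> Cabs z2 <= 1 -> Cabs t <= q ->
  Cabs (Cmul (Cinv (Csub (RtoC 1) (Cmul (s x) (u x)))) (Csub z1 (Cmul t z2))) <= / (1 - q).
Proof.
  intros H1 H2 Ht. destruct q_lam_bounds as [Hq _].
  assert (HD := Cabs_1_sub_s_u_ge x).
  rewrite Cabs_mul, Cabs_inv by nra.
  assert (Cabs (Csub z1 (Cmul t z2)) <= 1 + q).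
  { eapply Rle_trans; [apply Cabs_sub_le|]. rewrite Cabs_mul.
    generalize (Cabs_ge0 t) (Cabs_ge0 z2). intros; nra. }
  replace (/ (1 - q)) with (/ (1 - q ^ 2) * (1 + q)) by (field; split; nra).
  apply Rmult_le_compat; auto using Cabs_ge0.
  - apply Rlt_le, Rinv_0_lt_compat. generalize (Cabs_ge0 (Csub (RtoC 1) (Cmul (s x) (u x)))); nra.
  - apply Rinv_le_contravar; nra.
Qed.

Lemma opnorm_cocycle_le n x :
  opnorm (cocycle_iter alpha Bm n x) <= 2 * sqrt 2 / (1 - q) * Cabs (growth_u n x).
Proof.
  destruct q_lam_bounds as [Hq [Hl _]].
  apply opnorm_le_of_bound. intros w Hw.
  rewrite (eu_es_decomposition w x), mapply_C2add, !mapply_vscale, cocycle_iter_eu, cocycle_iter_es.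
  eapply Rle_trans; [apply vnorm_triangle|]. rewrite !vnorm_scale.
  assert (Hw1 : Cabs (fst w) <= 1) by (rewrite <- Hw; apply Cabs_fst_le_vnorm).
  assert (Hw2 : Cabs (snd w) <= 1) by (rewrite <- Hw; apply Cabs_snd_le_vnorm).
  assert (Hc1 := Cabs_decomposition_coef_le x _ _ _ Hw1 Hw2 (Hu_bound x)).
  assert (Hc2 := Cabs_decomposition_coef_le x _ _ _ Hw2 Hw1 (Hs_bound x)).
  set (c1 := Cabs (Cmul _ (Csub (fst w) _))) in *. set (c2 := Cabs (Cmul _ (Csub (snd w) _))) in *.
  assert (0 <= c1) by apply Cabs_ge0. assert (0 <= c2) by apply Cabs_ge0.
  destruct (vnorm_eu_bounds (x + INR n * alpha)) as [E1 E2].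
  destruct (vnorm_es_bounds (x + INR n * alpha)) as [E3 E4].
  assert (HPs : Cabs (growth_s n x) <= Cabs (growth_u n x)).
  { eapply Rle_trans; [apply Cabs_growth_s_le|]. eapply Rle_trans; [|apply Cabs_growth_u_ge].
    assert (1 <= lam ^ n) by (apply pow_R1_Rle; lra).
    apply Rle_trans with 1; [rewrite <- Rinv_1; apply Rinv_le_contravar|]; lra. }
  assert (0 <= Cabs (growth_s n x)) by apply Cabs_ge0.
  assert (Hq1 : 0 < / (1 - q)) by (apply Rinv_0_lt_compat; lra).
  assert (c1 * (Cabs (growth_u n x) * vnorm (eu (x + INR n * alpha)))
            <= / (1 - q) * (Cabs (growth_u n x) * sqrt 2))
    by (apply Rmult_le_compat; try nra).
  assert (c2 * (Cabs (growth_s n x) * vnorm (es (x + INR n * alpha)))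
            <= / (1 - q) * (Cabs (growth_u n x) * sqrt 2))
    by (apply Rmult_le_compat; try nra).
  replace (2 * sqrt 2 / (1 - q) * Cabs (growth_u n x))
    with (2 * (/ (1 - q) * (Cabs (growth_u n x) * sqrt 2))) by (field; lra).
  lra.
Qed.

Let phi (x : R) : R := ln (Cabs (Csub (a x) (s x))).

Lemma ln_Cabs_growth_u n x : ln (Cabs (growth_u n x)) = birkhoff_sum phi alpha n x.
Proof.
  destruct q_lam_bounds as [_ [Hl _]].
  induction n; simpl; [rewrite Cabs_RtoC, Rabs_R1, ln_1; reflexivity|].
  rewrite Cabs_mul, ln_mult, IHn; [reflexivity|apply Cabs_growth_u_gt0|].
  generalize (lam_le_Cabs_a_sub_s (x + INR n * alpha)); lra.
Qed.

Lemma ln_opnorm_cocycle_dist n x :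
  Rabs (ln (opnorm (cocycle_iter alpha Bm n x)) - birkhoff_sum phi alpha n x)
    <= ln (2 * sqrt 2 / (1 - q)) + ln (sqrt 2).
Proof.
  destruct q_lam_bounds as [Hq _]. assert (Hs2 := one_lt_sqrt2).
  assert (HK : 1 <= 2 * sqrt 2 / (1 - q))
    by (apply Rmult_le_reg_r with (1 - q); [lra|]; field_simplify; lra).
  assert (HP := Cabs_growth_u_gt0 n x).
  assert (L := opnorm_cocycle_ge n x). assert (U := opnorm_cocycle_le n x).
  assert (0 < Cabs (growth_u n x) / sqrt 2) by (apply Rdiv_lt_0_compat; lra).
  assert (0 <= ln (2 * sqrt 2 / (1 - q))) by (rewrite <- ln_1; apply ln_le; lra).
  assert (0 <= ln (sqrt 2)) by (rewrite <- ln_1; apply ln_le; lra).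
  rewrite <- ln_Cabs_growth_u. apply Rabs_le. split.
  - assert (0 < / sqrt 2) by (apply Rinv_0_lt_compat; lra).
    apply ln_le in L; auto. unfold Rdiv in L. rewrite ln_mult, ln_Rinv in L; lra.
  - apply ln_le in U; [|lra]. rewrite ln_mult in U; lra.
Qed.

Lemma continuity_pt_phi x : continuity_pt phi x.
Proof.
  destruct q_lam_bounds as [_ [Hl _]].
  apply (continuity_pt_ln (fun y => Cabs (Csub (a y) (s y)))).
  - apply continuity_pt_Cabs, Ccont_sub; auto.
  - generalize (lam_le_Cabs_a_sub_s x); lra.
Qed.

Theorem Lyapunov_exponent_eq :
  Un_cv (fun n => / INR (S n) * integral01 (fun x => ln (opnorm (cocycle_iter alpha Bm (S n) x))))
    (RInt phi 0 1).
Proof.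
  destruct q_lam_bounds as [Hq [Hl _]].
  apply (Un_cv_mean_of_bounded_dist
    (fun n => integral01 (fun x => ln (opnorm (cocycle_iter alpha Bm n x)))) _
    (ln (2 * sqrt 2 / (1 - q)) + ln (sqrt 2))).
  intros n.
  assert (HF : forall x, continuity_pt (fun y => ln (opnorm (cocycle_iter alpha Bm n y))) x).
  { intros x. apply (continuity_pt_ln (fun y => opnorm (cocycle_iter alpha Bm n y))).
    - apply continuity_pt_opnorm, Mcont_cocycle_iter.
      exact (conj Ha_cont (conj (Ccont_const _) (conj (Ccont_const _) (Ccont_const _)))).
    - eapply Rlt_le_trans; [|apply opnorm_cocycle_ge].
      apply Rdiv_lt_0_compat; [apply Cabs_growth_u_gt0|generalize one_lt_sqrt2; lra]. }
  assert (HS := continuity_pt_birkhoff_sum phi alpha n continuity_pt_phi).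
  assert (Hphi_per : forall x, phi (x + 1) = phi x) by (intros; unfold phi; rewrite Ha_per, Hs_per; auto).
  rewrite integral01_eq_RInt, <- (RInt_birkhoff_sum phi alpha n continuity_pt_phi Hphi_per)
    by exact HF.
  rewrite <- (RInt_minus (fun x => ln (opnorm (cocycle_iter alpha Bm n x))) _ 0 1)
    by (apply ex_RInt_continuous_R; auto).
  apply Rabs_le, (RInt_01_bounds (fun x => _ - birkhoff_sum phi alpha n x)).
  - intros x. apply (continuity_pt_minus (fun y => ln (opnorm (cocycle_iter alpha Bm n y)))); auto.
  - intros x. apply Rabs_le_between, ln_opnorm_cocycle_dist.
Qed.

Theorem Lyapunov_exponent_correction_bounds :
  ln (1 - q / m) <= RInt phi 0 1 - integral01 (fun x => ln (Cabs (a x))) <= ln (1 + q / m).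
Proof.
  destruct q_lam_bounds as [Hq _].
  assert (Hlna : forall x, continuity_pt (fun y => ln (Cabs (a y))) x).
  { intros x. apply (continuity_pt_ln (fun y => Cabs (a y))); [apply continuity_pt_Cabs; auto|].
    generalize (Ha_ge x); lra. }
  rewrite integral01_eq_RInt by exact Hlna.
  change (RInt phi 0 1 - RInt (fun x => ln (Cabs (a x))) 0 1)
    with (minus (RInt phi 0 1) (RInt (fun x => ln (Cabs (a x))) 0 1)).
  rewrite <- RInt_minus by (apply ex_RInt_continuous_R; auto using continuity_pt_phi).
  apply (RInt_01_bounds (fun x => phi x - ln (Cabs (a x)))).
  - intros x. apply (continuity_pt_minus phi); auto using continuity_pt_phi.
  - intros x. apply (ln_ratio_bounds _ (Cabs (s x))); auto using Cabs_ge0.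
    split; [apply Cabs_sub_ge|apply Cabs_sub_le].
Qed.

End LargePotentialCocycle.

(** * The estimate on the correction term *)

Lemma inv_pred_le_sigma m : 2 < m -> / (m - 1) <= Rmin 1 ((m - 1) / (m * (m - 2))) <= 1.
Proof.
  intros Hm. split; [|apply Rmin_l].
  apply Rmin_glb; [destruct (inv_pred_bounds m Hm); lra|].
  apply Rmult_le_reg_r with (m * (m - 2)); [nra|]. unfold Rdiv.
  rewrite Rmult_assoc, Rinv_l by nra.
  apply Rmult_le_reg_l with (m - 1); [lra|]. field_simplify; [|lra]. nra.
Qed.

Lemma sigma_ratio_bounds p q sg : 0 < p < 1 / 2 -> 0 < q <= sg -> sg <= 1 ->
  p <= sg * (1 - sg * p) ->
  ((1 - sg * p) ^ 2 + p ^ 2) / (1 + sg ^ 2) <= (1 - q * p) ^ 2 /\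
  (1 + q * p) ^ 2 <= (1 + sg * p) ^ 2 + p ^ 2.
Proof.
  intros Hp [Hq Hqs] Hs Hkey. split.
  - apply Rmult_le_reg_r with (1 + sg ^ 2); [nra|]. unfold Rdiv.
    rewrite Rmult_assoc, Rinv_l, Rmult_1_r by nra.
    assert (p ^ 2 <= (sg * (1 - sg * p)) ^ 2) by (apply pow_incr; lra).
    assert ((1 - sg * p) ^ 2 <= (1 - q * p) ^ 2) by (apply pow_incr; nra).
    assert ((1 - sg * p) ^ 2 * sg ^ 2 <= (1 - q * p) ^ 2 * sg ^ 2)
      by (apply Rmult_le_compat_r; [apply pow2_ge_0|lra]).
    replace ((sg * (1 - sg * p)) ^ 2) with ((1 - sg * p) ^ 2 * sg ^ 2) in * by ring. lra.
  - assert ((1 + q * p) ^ 2 <= (1 + sg * p) ^ 2) by (apply pow_incr; nra). nra.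
Qed.

(* With [p = 1/m], the hypothesis [p <= sg (1 - sg p)] of [sigma_ratio_bounds] reads
   [sg (m - sg) >= 1], which holds as soon as [sg >= 1/(m-1)]. *)
Lemma correction_bounds_of_q_over_m m sg Xi : 2 < m -> / (m - 1) <= sg <= 1 ->
  ln (1 - / (m - 1) / m) <= Xi <= ln (1 + / (m - 1) / m) ->
  ln (((1 - sg / m) ^ 2 + 1 / m ^ 2) / (1 + sg ^ 2)) <= 2 * Xi /\
  2 * Xi <= ln ((1 + sg / m) ^ 2 + 1 / m ^ 2) /\
  Xi >= - ln 2.
Proof.
  intros Hm [H1 H2] [X1 X2].
  destruct (inv_pred_bounds m Hm) as [[Hq0 Hq1] _]. set (q := / (m - 1)) in *.
  set (p := / m). assert (Hp : p * m = 1) by (unfold p; field; lra).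
  assert (Hp0 : 0 < p) by (unfold p; apply Rinv_0_lt_compat; lra).
  assert (Hp1 : p < 1 / 2) by (apply Rmult_lt_reg_r with m; lra).
  replace (sg / m) with (sg * p) by (unfold p; field; lra).
  replace (q / m) with (q * p) in X1, X2 by (unfold p; field; lra).
  replace (1 / m ^ 2) with (p ^ 2) by (unfold p; field; lra).
  assert (Hkey : p <= sg * (1 - sg * p)).
  { assert (sg * (m - 1) >= 1).
    { apply Rle_ge, Rmult_le_reg_r with q; [lra|].
      unfold q at 2. rewrite Rmult_assoc, Rinv_r by lra. lra. }
    apply Rmult_le_reg_r with m; [lra|].
    replace (sg * (1 - sg * p) * m) with (sg * (m - sg * (p * m))) by ring. rewrite Hp. nra. }
  destruct (sigma_ratio_bounds p q sg) as [R1 R2]; [lra|lra|lra|exact Hkey|].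
  assert (Hqp : 0 < q * p < 1 / 2) by (split; nra).
  assert (Hsq : forall t, 0 < t -> ln (t ^ 2) = 2 * ln t)
    by (intros; rewrite ln_pow by auto; simpl; ring).
  split; [|split].
  - apply Rle_trans with (ln ((1 - q * p) ^ 2)); [|rewrite Hsq; lra].
    apply ln_le; [|exact R1]. apply Rdiv_lt_0_compat; nra.
  - apply Rle_trans with (ln ((1 + q * p) ^ 2)); [rewrite Hsq; lra|].
    apply ln_le; [apply pow_lt; lra|exact R2].
  - rewrite <- ln_Rinv by lra. apply Rle_ge, Rle_trans with (ln (1 - q * p)); [|lra].
    apply ln_le; lra.
Qed.

Theorem proposition4 (h : R) (v : Cplx -> Cplx) (alpha E eps : R) :
  real_analytic_on_T h v ->
  irrational alpha ->
  Rabs eps < h ->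
  m_val v E eps > 2 ->
  let m := m_val v E eps in
  let sigma := Rmin 1 ((m - 1) / (m * (m - 2))) in
  uniformly_hyperbolic alpha (Bshift v E eps) /\
  exists Xi : R,
    Un_cv (fun n => L_seq v alpha E eps (S n))
          (integral01 (fun x => ln (Cabs (Csub (RtoC E) (v (mkC x eps))))) + Xi) /\
    ln (((1 - sigma / m) ^ 2 + 1 / m ^ 2) / (1 + sigma ^ 2)) <= 2 * Xi /\
    2 * Xi <= ln ((1 + sigma / m) ^ 2 + 1 / m ^ 2) /\
    Xi >= - ln 2.
Proof.
  intros Hv _ Heps Hm m sigma.
  pose (a := fun x => Csub (RtoC E) (v (mkC x eps))).
  destruct (horizontal_potential_props h v E eps a Hv Heps (fun _ => eq_refl))
    as [Ha_cont [Ha_per Ha_ge]].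
  destruct (riccati_fixed_point (fun x => a (x + - alpha)) (- alpha) m Hm)
    as [s [Hs_cont [Hs_bound [Hs_per Hs_fix]]]].
  { apply Ccont_shift, Ha_cont. }
  { intros x. apply Ha_ge. }
  { intros x. replace (x + 1 + - alpha) with (x + - alpha + 1) by ring. apply Ha_per. }
  assert (Hs_inv : forall x, s (x + alpha) = Cinv (Csub (a x) (s x))).
  { intros x. rewrite Hs_fix. unfold riccati. rewrite Rplus_assoc, Rplus_opp_r, Rplus_0_r.
    reflexivity. }
  destruct (riccati_fixed_point a alpha m Hm Ha_cont Ha_ge Ha_per)
    as [u [Hu_cont [Hu_bound [Hu_per Hu_inv]]]].
  change (Bshift v E eps) with (Bm a).
  split; [apply (Bm_uniformly_hyperbolic a s u alpha m); auto|].
  change (integral01 (fun x => ln (Cabs (Csub (RtoC E) (v (mkC x eps))))))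
    with (integral01 (fun x => ln (Cabs (a x)))).
  exists (RInt (fun x => ln (Cabs (Csub (a x) (s x)))) 0 1 - integral01 (fun x => ln (Cabs (a x)))).
  split.
  - rewrite Rplus_minus. apply (Lyapunov_exponent_eq a s u alpha m); auto.
  - apply correction_bounds_of_q_over_m; [exact Hm|apply inv_pred_le_sigma, Hm|].
    apply Lyapunov_exponent_correction_bounds; auto.
Qed.
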